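(* Let $N\geq3$, $J>0$, $\gamma>0$, and let $$H_W=J\sum_{i=1}^N\left[-2\sigma_i^z+\sigma_i^z\sigma_{i+1}^z-\gamma\,\boldsymbol{\sigma}_i\cdot\boldsymbol{\sigma}_{i+1}\right]$$ on $(\mathbb{C}^2)^{\otimes N}$ with periodic boundary conditions. Then $|W_N\rangle=\frac{1}{\sqrt N}\left(|10\cdots0\rangle+|010\cdots0\rangle+\cdots+|0\cdots01\rangle\right)$ is a ground state of $H_W$ (an eigenvector for its smallest eigenvalue), and the ground space is degenerate (it also contains $|0\rangle^{\otimes N}$).
   Context: $\sigma^x,\sigma^y,\sigma^z$ are the Pauli matrices with $\sigma^z|0\rangle=|0\rangle$, $\sigma^z|1\rangle=-|1\rangle$; $\sigma_i^a$ acts on qubit $i$; $\boldsymbol{\sigma}_i\cdot\boldsymbol{\sigma}_{j}=\sigma_i^x\sigma_j^x+\sigma_i^y\sigma_j^y+\sigma_i^z\sigma_j^z$. Periodic boundary conditions: site indices are taken mod $N$, so $\sigma_{N+1}=\sigma_1$. *)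

From HB Require Import structures.
From mathcomp Require Import all_boot all_order all_algebra all_field.
Set Implicit Arguments. Unset Strict Implicit. Unset Printing Implicit Defensive.
Import Order.TTheory GRing.Theory Num.Theory.
Local Open Scope ring_scope.

(* Computational basis of (C^2)^{(x)N}: basis index x : 'I_(2^N) corresponds to the
   bitstring whose qubit i (0-based, i < N) is bit i of x (binary expansion). *)
Definition bit (i : nat) (x : nat) : 'I_2 := inord ((x %/ 2 ^ i) %% 2).

(* Pauli matrices in the basis (|0>, |1>): sigma^z|0> = |0>, sigma^z|1> = -|1>. *)
Definition sigmax : 'M[algC]_2 := \matrix_(a < 2, b < 2) (if a != b then 1 else 0).
Definition sigmay : 'M[algC]_2 :=
  \matrix_(a < 2, b < 2)
    (if (val a == 0%N) && (val b == 1%N) then - 'i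
     else if (val a == 1%N) && (val b == 0%N) then 'i else 0).
Definition sigmaz : 'M[algC]_2 :=
  \matrix_(a < 2, b < 2) (if a == b then (if val a == 0%N then 1 else -1) else 0).

(* s acting on qubit i (identity on the other qubits): the entries of
   I (x) ... (x) s (x) ... (x) I. *)
Definition site (N : nat) (s : 'M[algC]_2) (i : nat) : 'M[algC]_(2 ^ N) :=
  \matrix_(x, y)
    (s (bit i x) (bit i y) *
     ([forall j : 'I_N, (val j != i) ==> (bit j x == bit j y)])%:R).

Definition nxt (N i : nat) : nat := (i.+1 %% N)%N.

Definition dotS (N i : nat) : 'M[algC]_(2 ^ N) :=
  site N sigmax i *m site N sigmax (nxt N i)
  + site N sigmay i *m site N sigmay (nxt N i)
  + site N sigmaz i *m site N sigmaz (nxt N i).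

Definition HW (N : nat) (J gamma : algC) : 'M[algC]_(2 ^ N) :=
  J *: \sum_(i < N)
        (- (2 *: site N sigmaz i)
         + site N sigmaz i *m site N sigmaz (nxt N i)
         - gamma *: dotS N i).

Definition Wstate (N : nat) : 'cV[algC]_(2 ^ N) :=
  \col_x ((sqrtC N%:R)^-1 * ([exists i : 'I_N, val x == (2 ^ i)%N])%:R).

Definition Zstate (N : nat) : 'cV[algC]_(2 ^ N) := \col_x ((val x == 0%N)%:R).

From HB Require Import structures.
From mathcomp Require Import all_boot all_order all_algebra all_field.
From mathcomp Require Import zify ring.
Import Order.TTheory GRing.Theory Num.Theory.
Local Open Scope ring_scope.
Set Implicit Arguments. Unset Strict Implicit.

(* On computational basis states sigma_i . sigma_j acts as 2 P_ij - 1, where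
   P_ij swaps qubits i and j.  Since sum_i sigma_i^z = sum_i sigma_(i+1)^z on
   the ring, the Ising part of H_W equals E - N with
   E = sum_i (1 - sigma_i^z)(1 - sigma_(i+1)^z) >= 0 diagonal.  Hence
     <v, H_W v> = -J (1 + gamma) N |v|^2
                  + J (<v, E v> + gamma sum_i |v - P_(i,i+1) v|^2),
   so no eigenvalue lies below -J (1 + gamma) N, and this value is attained by
   |0...0> and |W_N>: both are fixed by every neighbour swap and killed by E. *)

Definition bitn (i x : nat) : nat := (x %/ 2 ^ i) %% 2.

Lemma expn2_gt0 n : (0 < 2 ^ n)%N. Proof. by rewrite expn_gt0. Qed.

Lemma bitn_lt2 i x : (bitn i x < 2)%N. Proof. by rewrite /bitn ltn_pmod. Qed.

Lemma bitn_eq01 i x : bitn i x = 0%N \/ bitn i x = 1%N.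
Proof. by have := bitn_lt2 i x; lia. Qed.

Lemma val_bit i x : val (bit i x) = bitn i x.
Proof. by rewrite /bit /= inordK // bitn_lt2. Qed.

Lemma eq_bit i x y : (bit i x == bit i y) = (bitn i x == bitn i y).
Proof. by rewrite -val_eqE !val_bit. Qed.

Lemma bitn0 j : bitn j 0 = 0%N.
Proof. by rewrite /bitn div0n mod0n. Qed.

Lemma bitnS j x : bitn j.+1 x = bitn j (x %/ 2).
Proof. by rewrite /bitn expnS divnMA. Qed.

Lemma bitn_addMl i j u r : (r < 2 ^ i)%N ->
  bitn j (u * 2 ^ i + r) = if (j < i)%N then bitn j r else bitn (j - i) u.
Proof.
move=> hr; rewrite /bitn; case: ltnP => hji.
  have -> : (2 ^ i = 2 ^ (i - j - 1) * 2 * 2 ^ j)%N.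
    by rewrite -expnSr -expnD; congr (2 ^ _)%N; lia.
  by rewrite mulnA divnMDl ?expn2_gt0 // mulnA modnMDl.
have -> : (2 ^ j = 2 ^ i * 2 ^ (j - i))%N by rewrite -expnD; congr (2 ^ _)%N; lia.
by rewrite divnMA divnMDl ?expn2_gt0 // (divn_small hr) addn0.
Qed.

Lemma bitn_modn N j y : (j < N)%N -> bitn j (y %% 2 ^ N) = bitn j y.
Proof.
by move=> hj; rewrite {2}(divn_eq y (2 ^ N)) bitn_addMl ?ltn_pmod ?expn2_gt0 // hj.
Qed.

Lemma bitn_divn i j x : (i <= j)%N -> bitn j x = bitn (j - i) (x %/ 2 ^ i).
Proof.
move=> hij; rewrite {1}(divn_eq x (2 ^ i)) bitn_addMl ?ltn_pmod ?expn2_gt0 //.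
by rewrite ltnNge hij.
Qed.

Lemma bitn_exp2 j k : bitn j (2 ^ k) = (j == k).
Proof.
have := @bitn_addMl k j 1 0 (expn2_gt0 k); rewrite mul1n addn0 => ->.
case: ltnP => hkj.
  by rewrite bitn0; have -> : (j == k) = false by apply/eqP; lia.
rewrite /bitn; case: (eqVneq j k) => [->|hjk]; first by rewrite subnn.
rewrite divn_small // (_ : j - k = (j - k - 1).+1)%N; last by lia.
by rewrite expnS; have := expn2_gt0 (j - k - 1); lia.
Qed.

Lemma bitn_inj N x y : (x < 2 ^ N)%N -> (y < 2 ^ N)%N ->
  (forall j, (j < N)%N -> bitn j x = bitn j y) -> x = y.
Proof.
elim: N x y => [|N IH] x y hx hy eq_xy.
  by move: hx hy; rewrite expn0; clear eq_xy; case: x => [|[]]; case: y => [|[]].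
rewrite (divn_eq x 2) (divn_eq y 2).
have := eq_xy 0%N isT; rewrite /bitn !expn0 !divn1 => ->.
congr (_ * _ + _)%N; apply: IH; rewrite ?ltn_divLR -?expnSr //.
by move=> j hj; rewrite -!bitnS; apply: eq_xy.
Qed.

(* [x] split as [(hi * 2 + b) * 2 ^ i + lo] with [b] bit [i]; flip [b]. *)
Definition flipn i x :=
  ((x %/ 2 ^ i %/ 2 * 2 + (1 - bitn i x)) * 2 ^ i + x %% 2 ^ i)%N.

Lemma bitn_flipn i j x :
  bitn j (flipn i x) = if j == i then (1 - bitn i x)%N else bitn j x.
Proof.
have bi_lt2 := bitn_lt2 i x.
rewrite /flipn bitn_addMl ?ltn_pmod ?expn2_gt0 //; case: (ltnP j i) => hji.
  by rewrite bitn_modn //; case: eqP => //; lia.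
rewrite (@bitn_addMl 1) ?expn1; last by lia.
rewrite (bitn_divn x hji); case: eqVneq => [->|hji'].
  by rewrite subnn /bitn expn0 divn1 modn_small //; lia.
by rewrite ifF -?bitnS; [congr bitn|]; lia.
Qed.

Definition flip_bit N i (x : 'I_(2 ^ N)) : 'I_(2 ^ N) :=
  Ordinal (ltn_pmod (flipn i x) (expn2_gt0 N)).

Lemma bitn_flip_bit N i j (x : 'I_(2 ^ N)) : (j < N)%N ->
  bitn j (flip_bit i x) = if j == i then (1 - bitn i x)%N else bitn j x.
Proof. by move=> hj; rewrite /= bitn_modn // bitn_flipn. Qed.

Lemma eq_ord_bitn N (x y : 'I_(2 ^ N)) :
  (forall j, (j < N)%N -> bitn j x = bitn j y) -> x = y.
Proof. by move=> eq_xy; apply/val_inj/(bitn_inj (ltn_ord x) (ltn_ord y)). Qed.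

Lemma flip_bit_neq N i (x : 'I_(2 ^ N)) : (i < N)%N -> flip_bit i x != x.
Proof.
move=> hi; apply/eqP => /(congr1 (fun y : 'I_(2 ^ N) => bitn i y)).
rewrite bitn_flip_bit // eqxx.
by have := bitn_lt2 i x; lia.
Qed.

Lemma bit_flip_bit N i (x : 'I_(2 ^ N)) : (i < N)%N ->
  (bit i x == bit i (flip_bit i x)) = false.
Proof.
by move=> hi; rewrite eq_bit bitn_flip_bit // eqxx; have := bitn_lt2 i x; lia.
Qed.

Lemma site_entry N s i (x y : 'I_(2 ^ N)) : (i < N)%N ->
  site N s i x y = if y == x then s (bit i x) (bit i x)
                   else if y == flip_bit i x then s (bit i x) (bit i y) else 0.
Proof.
move=> hi; rewrite mxE.
set others_eq := [forall j : 'I_N, _].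
have othersP : reflect (forall j, (j < N)%N -> j != i -> bitn j x = bitn j y)
                       others_eq.
  rewrite /others_eq; apply: (iffP forallP) => [h j hj hji | h j].
    by move: (h (Ordinal hj)); rewrite /= hji eq_bit => /eqP.
  by apply/implyP => hji; rewrite eq_bit; apply/eqP/h.
case: eqP => [eq_yx | ne_yx].
  subst y; have -> : others_eq = true by apply/othersP => *.
  by rewrite mulr1.
case: eqP => [eq_yf | ne_yf].
  subst y; have -> : others_eq = true; last by rewrite mulr1.
  by apply/othersP => j hj hji; rewrite bitn_flip_bit // (negbTE hji).
have -> : others_eq = false; last by rewrite mulr0.
apply/negbTE/othersP => eq_xy.
have [e | ne] := eqVneq (bitn i x) (bitn i y).
  apply/ne_yx/eq_ord_bitn => j hj.
  by case: (eqVneq j i) => [-> // | hji]; rewrite eq_xy.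
apply/ne_yf/eq_ord_bitn => j hj; rewrite bitn_flip_bit //.
case: (eqVneq j i) => [-> | hji]; last by rewrite eq_xy.
by move: ne; have := bitn_lt2 i x; have := bitn_lt2 i y; lia.
Qed.

Lemma site_mulv N s i (v : 'cV[algC]_(2 ^ N)) x : (i < N)%N ->
  (site N s i *m v) x 0 = s (bit i x) (bit i x) * v x 0
     + s (bit i x) (bit i (flip_bit i x)) * v (flip_bit i x) 0.
Proof.
move=> hi; rewrite mxE (bigD1 x) //= (bigD1 (flip_bit i x)) ?flip_bit_neq //=.
rewrite big1 ?addr0 => [|y /andP [ne_yf ne_yx]]; last first.
  by rewrite site_entry // (negbTE ne_yx) (negbTE ne_yf) mul0r.
by rewrite !site_entry // eqxx (negbTE (flip_bit_neq x hi)) eqxx.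
Qed.

Definition zsign (b : nat) : algC := if b == 0%N then 1 else -1.
Definition ysign (b : nat) : algC := if b == 0%N then - 'i else 'i.

Lemma site_sigmaz_mulv N i (v : 'cV[algC]_(2 ^ N)) x : (i < N)%N ->
  (site N sigmaz i *m v) x 0 = zsign (bitn i x) * v x 0.
Proof.
by move=> hi; rewrite site_mulv // !mxE eqxx bit_flip_bit // mul0r addr0 val_bit.
Qed.

Lemma site_sigmax_mulv N i (v : 'cV[algC]_(2 ^ N)) x : (i < N)%N ->
  (site N sigmax i *m v) x 0 = v (flip_bit i x) 0.
Proof.
by move=> hi; rewrite site_mulv // !mxE eqxx bit_flip_bit // mul0r add0r mul1r.
Qed.

Lemma site_sigmay_mulv N i (v : 'cV[algC]_(2 ^ N)) x : (i < N)%N ->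
  (site N sigmay i *m v) x 0 = ysign (bitn i x) * v (flip_bit i x) 0.
Proof.
move=> hi; rewrite site_mulv // !mxE !val_bit bitn_flip_bit // eqxx /ysign.
by case: (bitn_eq01 i x) => ->; rewrite /= ?mul0r ?add0r.
Qed.

Definition transpn (i k j : nat) : nat :=
  if j == i then k else if j == k then i else j.

Lemma transpnK i k : involutive (transpn i k).
Proof.
move=> j; rewrite /transpn; have [-> | ne_ji] := eqVneq j i.
  by rewrite eqxx; repeat (case: ifP => /eqP ?); lia.
have [-> | ne_jk] := eqVneq j k; rewrite ?eqxx; repeat (case: ifP => /eqP ?); lia.
Qed.

Lemma transpn_lt N i k j : (i < N)%N -> (k < N)%N -> (j < N)%N ->
  (transpn i k j < N)%N.
Proof. by rewrite /transpn => hi hk hj; repeat (case: ifP => _). Qed.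

Definition swap_bits N i k (x : 'I_(2 ^ N)) : 'I_(2 ^ N) :=
  if bitn i x == bitn k x then x else flip_bit k (flip_bit i x).

Section SwapBits.
Variables (N i k : nat).
Hypotheses (hi : (i < N)%N) (hk : (k < N)%N) (hki : k != i).

Lemma bitn_swap_bits (x : 'I_(2 ^ N)) j : (j < N)%N ->
  bitn j (swap_bits i k x) = bitn (transpn i k j) x.
Proof.
move=> hj; rewrite /swap_bits /transpn.
have bi := bitn_lt2 i x; have bk := bitn_lt2 k x.
case: eqVneq => [eq_ik | ne_ik].
  by case: eqVneq => [-> // | _]; case: eqVneq => [-> | _].
rewrite !bitn_flip_bit //; have [-> | hji] := eqVneq j i.
  by rewrite (eq_sym i k) (negbTE hki); lia.
have [jk | //] := eqVneq j k.
by subst j; rewrite (negbTE hki); lia.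
Qed.

Lemma swap_bitsK : involutive (@swap_bits N i k).
Proof.
move=> x; apply: eq_ord_bitn => j hj.
by rewrite !bitn_swap_bits ?transpnK ?transpn_lt.
Qed.

Lemma dot_sites_mulv (v : 'cV[algC]_(2 ^ N)) x :
  ((site N sigmax i *m site N sigmax k + site N sigmay i *m site N sigmay k
    + site N sigmaz i *m site N sigmaz k) *m v) x 0
  = 2 * v (swap_bits i k x) 0 - v x 0.
Proof.
rewrite !mulmxDl -!mulmxA ![(_ + _ : 'cV__) x 0]mxE.
rewrite site_sigmax_mulv // site_sigmax_mulv // site_sigmay_mulv //.
rewrite site_sigmay_mulv // site_sigmaz_mulv // site_sigmaz_mulv //.
rewrite bitn_flip_bit // (negbTE hki) /swap_bits /zsign /ysign !mulrA.
have ii : 'i * 'i = -1 :> algC by rewrite -expr2 sqrCi.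
case: (bitn_eq01 i x) => ->; case: (bitn_eq01 k x) => -> /=;
  rewrite ?mulrNN ?mulrN ?mulNr ?ii ?opprK; ring.
Qed.

End SwapBits.

Definition sqnorm n (v : 'cV[algC]_n) : algC := \sum_x v x 0 * (v x 0)^*.

Lemma sqnorm_gt0 n (v : 'cV[algC]_n) : v != 0 -> 0 < sqnorm v.
Proof.
move=> v_neq0; have [x vx_neq0] : exists x, v x 0 != 0.
  apply/existsP; apply: contraR v_neq0 => /existsPn v0; apply/eqP/matrixP => x j.
  by rewrite (ord1 j) mxE; apply/eqP; have := v0 x; rewrite negbK.
rewrite /sqnorm (bigD1 x) //= ltr_wpDr ?mul_conjC_gt0 //.
by apply: sumr_ge0 => y _; apply: mul_conjC_ge0.
Qed.

(* Both cross terms of [|u - u \o s|^2] equal [\sum_x u (s x) * (u x)^*]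
   because [s] is an involution. *)
Lemma sum_involution_form (I : finType) (u : I -> algC) (s : I -> I) :
  involutive s ->
  \sum_x (2 * u (s x) - u x) * (u x)^* =
  \sum_x u x * (u x)^* - \sum_x (u x - u (s x)) * (u x - u (s x))^*.
Proof.
move=> sK; have s_inj : injective s := inv_inj sK.
set T := \sum_x u (s x) * (u x)^*.
have T' : \sum_x u x * (u (s x))^* = T.
  by rewrite (reindex_inj s_inj) /=; apply: eq_bigr => x _; rewrite sK.
have norm_s : \sum_x u (s x) * (u (s x))^* = \sum_x u x * (u x)^*.
  by rewrite [RHS](reindex_inj s_inj).
have -> : \sum_x (u x - u (s x)) * (u x - u (s x))^* =
    \sum_x u x * (u x)^* - \sum_x u x * (u (s x))^* - T
    + \sum_x u (s x) * (u (s x))^*.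
  rewrite /T -!sumrB -big_split /=; apply: eq_bigr => x _.
  by rewrite rmorphB /=; ring.
have -> : \sum_x (2 * u (s x) - u x) * (u x)^* = 2 * T - \sum_x u x * (u x)^*.
  by rewrite /T mulr_sumr -sumrB; apply: eq_bigr => x _; ring.
by rewrite T' norm_s; ring.
Qed.

Lemma rank_row_mx_col (F : fieldType) n (u v : 'cV[F]_n) a b :
  u a 0 != 0 -> u b 0 = 0 -> v b 0 != 0 -> \rank (row_mx u v) = 2%N.
Proof.
move=> ua0 ub0 vb0; apply/eqP; rewrite eqn_leq rank_leq_col /=.
pose f (i : 'I_2) := if i == ord0 then a else b.
pose M := rowsub f (row_mx u v).
suff rkM : \rank M = 2%N by rewrite -rkM /M rowsubE mxrankM_maxr.
have ME i (j : 'I_(1 + 1)) : M i j = if j == ord0 then u (f i) 0 else v (f i) 0.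
  by rewrite !mxE; case: splitP => k; rewrite (ord1 k) => jk; rewrite -val_eqE /= jk.
have trigMT : is_trig_mx M^T.
  apply/is_trig_mxP => i j lt_ij; rewrite mxE ME.
  by case: i lt_ij => -[|//] ? /=; case: j => -[|[|//]] ?.
rewrite mxrank_unit // unitmxE unitfE -det_tr det_trig // big_ord_recl big_ord1.
by rewrite [_^T _ _]mxE [_^T _ _]mxE !ME /= mulf_neq0.
Qed.

Lemma sum_nxt (V : nmodType) N (F : nat -> V) : (0 < N)%N ->
  \sum_(i < N) F (nxt N i) = \sum_(i < N) F i.
Proof.
case: N => // n _; rewrite big_ord_recr big_ord_recl /= addrC /nxt modnn.
congr (_ + _); apply: eq_bigr => i _ /=; rewrite modn_small //.
by have := ltn_ord i; lia.
Qed.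

(* [1 - zsign b = 2 b], so each bond contributes [4] when both its qubits are
   [|1>] and [0] otherwise. *)
Definition bond_energy N (x : nat) : algC :=
  \sum_(i < N) (1 - zsign (bitn i x)) * (1 - zsign (bitn (nxt N i) x)).

Lemma bond_energy_ge0 N x : 0 <= bond_energy N x.
Proof.
apply: sumr_ge0 => i _.
by apply: mulr_ge0; rewrite /zsign; case: eqP; rewrite ?subrr // opprK addr_ge0.
Qed.

Lemma sum_zsign_terms N x : (0 < N)%N ->
  \sum_(i < N) (- (2 * zsign (bitn i x))
                 + zsign (bitn i x) * zsign (bitn (nxt N i) x))
  = bond_energy N x - N%:R.
Proof.
move=> N_gt0; apply/eqP; rewrite eq_sym subr_eq /bond_energy.
have -> : N%:R = \sum_(i < N) (1 : algC) by rewrite sumr_const card_ord.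
rewrite -big_split /=.
have rot : \sum_(i < N) (zsign (bitn i x) - zsign (bitn (nxt N i) x)) = 0.
  by rewrite sumrB (sum_nxt (fun i => zsign (bitn i x))) // subrr.
rewrite -[X in _ == X]addr0 -[X in _ == _ + X]rot -big_split /=.
by apply/eqP/eq_bigr => i _; ring.
Qed.

Definition bond_swap N i : 'I_(2 ^ N) -> 'I_(2 ^ N) := swap_bits i (nxt N i).
Arguments bond_swap : clear implicits.

Definition ground_energy N (J gamma : algC) : algC := - (J * (1 + gamma) * N%:R).

Section Chain.
Variable N : nat.
Hypothesis N_ge2 : (2 <= N)%N.

Lemma nxt_lt i : (nxt N i < N)%N.
Proof. by rewrite /nxt ltn_pmod //; lia. Qed.

Lemma nxt_neq i : (i < N)%N -> nxt N i != i.
Proof.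
move=> hi; rewrite /nxt; case: (ltnP i.+1 N) => h.
  by rewrite modn_small //; lia.
have -> : i.+1 = N by lia.
by rewrite modnn; lia.
Qed.

Lemma bond_swapK (i : 'I_N) : involutive (bond_swap N i).
Proof. exact: swap_bitsK (ltn_ord i) (nxt_lt i) (nxt_neq (ltn_ord i)). Qed.

Lemma HW_mulv J gamma (v : 'cV[algC]_(2 ^ N)) x :
  (HW N J gamma *m v) x 0 = J * ((bond_energy N x - N%:R) * v x 0
      - gamma * \sum_(i < N) (2 * v (bond_swap N i x) 0 - v x 0)).
Proof.
rewrite /HW -scalemxAl mxE mulmx_suml summxE; congr (_ * _).
rewrite -sum_zsign_terms; last by lia.
rewrite mulr_suml mulr_sumr -sumrB; apply: eq_bigr => i _.
have hi := ltn_ord i.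
rewrite !mulmxDl !mulNmx -!scalemxAl -!mulmxA.
rewrite ![(_ + _ : 'cV__) x 0]mxE ![(- _ : 'cV__) x 0]mxE.
rewrite ![(_ *: _ : 'cV__) x 0]mxE.
rewrite dot_sites_mulv ?nxt_lt ?nxt_neq //.
by rewrite !site_sigmaz_mulv ?nxt_lt //; ring.
Qed.

Lemma HW_mulv_bond_invariant J gamma (v : 'cV[algC]_(2 ^ N)) :
  (forall (i : 'I_N) y, v (bond_swap N i y) 0 = v y 0) ->
  (forall x, v x 0 != 0 -> bond_energy N x = 0) ->
  HW N J gamma *m v = ground_energy N J gamma *: v.
Proof.
move=> v_inv v_supp; apply/matrixP => x j; rewrite (ord1 j) HW_mulv mxE.
under eq_bigr => i _ do rewrite v_inv.
rewrite sumr_const card_ord /ground_energy.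
by have [-> | /v_supp ->] := eqVneq (v x 0) 0; rewrite -mulr_natl; ring.
Qed.

Lemma Zstate_bond_invariant (i : 'I_N) y :
  Zstate N (bond_swap N i y) 0 = Zstate N y 0.
Proof.
rewrite !mxE; have [y0 | y_neq0] := eqVneq (val y) 0%N.
  by rewrite /bond_swap /swap_bits y0 !bitn0 eqxx y0.
suff /negbTE -> : val (bond_swap N i y) != 0%N by [].
apply: contra y_neq0 => /eqP sy0; rewrite -(bond_swapK i y).
by rewrite /bond_swap /swap_bits sy0 !bitn0 eqxx sy0.
Qed.

Lemma HW_Zstate J gamma :
  HW N J gamma *m Zstate N = ground_energy N J gamma *: Zstate N.
Proof.
apply: HW_mulv_bond_invariant; first exact: Zstate_bond_invariant.
move=> x; rewrite mxE pnatr_eq0 eqb0 negbK => /eqP ->.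
by rewrite /bond_energy big1 // => i _; rewrite !bitn0 /zsign /= subrr mul0r.
Qed.

Definition one_hot (x : 'I_(2 ^ N)) : bool :=
  [exists k : 'I_N, val x == (2 ^ k)%N].

Lemma one_hot_bond_swap (i : 'I_N) x : one_hot (bond_swap N i x) = one_hot x.
Proof.
suff imp y : one_hot y -> one_hot (bond_swap N i y).
  by apply/idP/idP => [/imp | /imp //]; rewrite bond_swapK.
case/existsP=> k /eqP yk.
have hk := transpn_lt (ltn_ord i) (nxt_lt i) (ltn_ord k).
apply/existsP; exists (Ordinal hk); apply/eqP/bitn_inj => [||j hj].
- exact: ltn_ord.
- by rewrite ltn_exp2l.
rewrite bitn_swap_bits ?nxt_lt ?nxt_neq // yk !bitn_exp2 /=.
by rewrite -{1}(transpnK i (nxt N i) k) (inj_eq (can_inj (transpnK _ _))).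
Qed.

Lemma bond_energy_one_hot x : one_hot x -> bond_energy N x = 0.
Proof.
case/existsP=> k /eqP ->; rewrite /bond_energy big1 // => i _.
rewrite !bitn_exp2 /zsign; have [<- | ne_ik] := eqVneq (val i) (val k).
  by rewrite (negbTE (nxt_neq (ltn_ord i))) subrr mulr0.
by rewrite subrr mul0r.
Qed.

Lemma HW_Wstate J gamma :
  HW N J gamma *m Wstate N = ground_energy N J gamma *: Wstate N.
Proof.
apply: HW_mulv_bond_invariant => [i y | x].
  by rewrite !mxE -!/(one_hot _) one_hot_bond_swap.
rewrite mxE -/(one_hot _); have [/bond_energy_one_hot // | _] := boolP (one_hot x).
by rewrite mulr0 eqxx.
Qed.

Definition swap_defect (v : 'cV[algC]_(2 ^ N)) (i : 'I_N) : algC :=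
  \sum_x (v x 0 - v (bond_swap N i x) 0) * (v x 0 - v (bond_swap N i x) 0)^*.

Lemma HW_form J gamma (v : 'cV[algC]_(2 ^ N)) :
  \sum_x (HW N J gamma *m v) x 0 * (v x 0)^* =
  ground_energy N J gamma * sqnorm v
  + J * (\sum_(x : 'I_(2 ^ N)) bond_energy N x * (v x 0 * (v x 0)^*)
         + gamma * \sum_(i < N) swap_defect v i).
Proof.
have entry (x : 'I_(2 ^ N)) : (HW N J gamma *m v) x 0 * (v x 0)^* =
    J * ((bond_energy N x - N%:R) * (v x 0 * (v x 0)^*)) - J * gamma *
    \sum_(i < N) (2 * v (bond_swap N i x) 0 - v x 0) * (v x 0)^*.
  by rewrite HW_mulv // -mulr_suml; ring.
have swap_term (i : 'I_N) :
    \sum_x (2 * v (bond_swap N i x) 0 - v x 0) * (v x 0)^*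
    = sqnorm v - swap_defect v i.
  exact: sum_involution_form (fun x => v x 0) _ (bond_swapK i).
rewrite (eq_bigr _ (fun x _ => entry x)) sumrB -!mulr_sumr exchange_big /=.
rewrite (eq_bigr _ (fun i _ => swap_term i)) sumrB sumr_const card_ord.
under eq_bigr => x _ do rewrite mulrBl.
by rewrite sumrB -mulr_sumr -/(sqnorm v) /ground_energy -mulr_natl; ring.
Qed.

Lemma HW_eigenvalue_ge J gamma mu (v : 'cV[algC]_(2 ^ N)) :
  0 < J -> 0 <= gamma -> v != 0 -> HW N J gamma *m v = mu *: v ->
  ground_energy N J gamma <= mu.
Proof.
move=> J_gt0 gamma_ge0 v_neq0 eig.
have := HW_form J gamma v; rewrite eig.
under eq_bigr => x _ do rewrite mxE -mulrA.
rewrite -mulr_sumr -/(sqnorm v).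
set R := (X in J * X) => form.
have R_ge0 : 0 <= R.
  rewrite /R addr_ge0 ?mulr_ge0 ?sumr_ge0 // => [x _ | i _].
    by rewrite mulr_ge0 ?bond_energy_ge0 ?mul_conjC_ge0.
  by rewrite sumr_ge0 // => x _; rewrite mul_conjC_ge0.
have gap : (mu - ground_energy N J gamma) * sqnorm v = J * R.
  by rewrite mulrBl form; ring.
rewrite -subr_ge0 -(pmulr_lge0 _ (sqnorm_gt0 v_neq0)) gap.
by rewrite mulr_ge0 // ltW.
Qed.

End Chain.

Unset Implicit Arguments.

Theorem mainTheorem13 (N : nat) (J gamma : algC) :
  (3 <= N)%N -> 0 < J -> 0 < gamma ->
  exists lambda : algC,
    [/\ Wstate N != 0 /\ HW N J gamma *m Wstate N = lambda *: Wstate N,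
        (forall (mu : algC) (v : 'cV[algC]_(2 ^ N)),
            v != 0 -> HW N J gamma *m v = mu *: v -> lambda <= mu),
        Zstate N != 0 /\ HW N J gamma *m Zstate N = lambda *: Zstate N
      & \rank (row_mx (Wstate N) (Zstate N)) = 2%N].
Proof.
move=> N_ge3 J_gt0 gamma_gt0.
have N_ge2 : (2 <= N)%N by lia.
have N_gt0 : (0 < N)%N by lia.
have e1_lt : (1 < 2 ^ N)%N by rewrite -{1}(expn0 2) ltn_exp2l.
pose e0 : 'I_(2 ^ N) := Ordinal (expn2_gt0 N).
pose e1 : 'I_(2 ^ N) := Ordinal e1_lt.
have W_e1 : Wstate N e1 0 != 0.
  have one_hot_e1 : [exists i : 'I_N, val e1 == (2 ^ i)%N].
    by apply/existsP; exists (Ordinal N_gt0).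
  by rewrite mxE one_hot_e1 mulr1 invr_eq0 sqrtC_eq0 pnatr_eq0 -lt0n.
have W_e0 : Wstate N e0 0 = 0.
  rewrite mxE; case: existsP => [[i /eqP /= i0] | _]; last by rewrite mulr0.
  by have := expn2_gt0 i; lia.
have Z_e0 : Zstate N e0 0 != 0 by rewrite mxE oner_neq0.
exists (ground_energy N J gamma); split.
- by split; [apply: contraNneq W_e1 => ->; rewrite mxE | apply: HW_Wstate].
- by move=> mu v; apply: HW_eigenvalue_ge (ltW gamma_gt0).
- by split; [apply: contraNneq Z_e0 => ->; rewrite mxE | apply: HW_Zstate].
- exact: rank_row_mx_col W_e1 W_e0 Z_e0.
Qed.
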